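(* Let $X\sim\mathrm{ECR}(\beta,\lambda)$ and $r\in(-2\beta,1)$. Then $\mathbb E(X^r)$ is finite and $$\mathbb E(X^r)=\beta(\lambda\sqrt2)^r\,B\!\left(1-r,\tfrac r2+\beta\right)\,{}_2F_1\!\left(-\tfrac r2,\tfrac r2+\beta;\,1-\tfrac r2+\beta;\,\tfrac12\right).$$
   Context: The exponentiated Cauchy–Rayleigh distribution $\mathrm{ECR}(\beta,\lambda)$, with shape parameter $\beta>0$ and scale parameter $\lambda>0$, is the distribution on $(0,\infty)$ with cdf $F(x)=\left(1-\frac{\lambda}{\sqrt{\lambda^2+x^2}}\right)^{\beta}$ for $x>0$. $B(\cdot,\cdot)$ is the beta function and ${}_2F_1(a,b;c;z)=\sum_{k\ge0}\frac{(a)_k(b)_k}{(c)_k}\frac{z^k}{k!}$ is the Gauss hypergeometric function, with $(a)_k=\Gamma(a+k)/\Gamma(a)$. *)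

From Stdlib Require Import Reals Arith.
Open Scope R_scope.

Definition ECR_cdf (beta lambda x : R) : R :=
  if Rle_dec x 0 then 0
  else Rpower (1 - lambda / sqrt (lambda ^ 2 + x ^ 2)) beta.

Definition improper_int_0_inf (g : R -> R) (l : R) : Prop :=
  (forall u v, 0 < u -> u <= v -> inhabited (Riemann_integrable g u v)) /\
  (forall eps, eps > 0 -> exists d, d > 0 /\ exists M,
     forall u v (pr : Riemann_integrable g u v),
       0 < u < d -> M < v -> Rabs (RiemannInt pr - l) < eps).

Definition improper_int_0_1 (g : R -> R) (l : R) : Prop :=
  (forall u v, 0 < u -> u <= v -> v < 1 -> inhabited (Riemann_integrable g u v)) /\
  (forall eps, eps > 0 -> exists d, d > 0 /\
     forall u v (pr : Riemann_integrable g u v),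
       0 < u < d -> 1 - d < v < 1 -> Rabs (RiemannInt pr - l) < eps).

Definition is_Beta (a b l : R) : Prop :=
  improper_int_0_1 (fun t => Rpower t (a - 1) * Rpower (1 - t) (b - 1)) l.

Fixpoint poch (a : R) (k : nat) : R :=
  match k with
  | O => 1
  | S k' => poch a k' * (a + INR k')
  end.

Definition is_hyp2F1 (a b c z l : R) : Prop :=
  infinite_sum (fun k => poch a k * poch b k / poch c k * z ^ k / INR (Factorial.fact k)) l.

(* The substitution s = lambda / sqrt (lambda^2 + x^2) maps (0, oo) onto (0, 1), turns
   the cdf into (1 - s)^beta and the moment integral into
     beta (lambda sqrt 2)^r  int_0^1 s^(-r) (1 - s)^(r/2 + beta - 1) ((1 + s)/2)^(r/2) ds.
   Writing ((1 + s)/2)^(r/2) = (1 - (1 - s)/2)^(r/2) as a binomial series in (1 - s)/2,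
   whose coefficients are absolutely summable, the integral can be taken term by term;
   the k-th term is a Beta integral B(1 - r, r/2 + beta + k), which the recursion
   B(p, q + 1) = B(p, q) q / (p + q) expresses through Pochhammer symbols, and the
   resulting series is the hypergeometric one. *)

From Stdlib Require Import Reals Lra Lia Classical Factorial.
From Coquelicot Require Import Coquelicot.
Open Scope R_scope.

Lemma Rpower_gt0 x e : 0 < Rpower x e.
Proof. exact (exp_pos _). Qed.

Lemma Rpower_base_1 e : Rpower 1 e = 1.
Proof. unfold Rpower; now rewrite ln_1, Rmult_0_r, exp_0. Qed.

Lemma Rpower_le1 x e : 0 < x <= 1 -> 0 <= e -> Rpower x e <= 1.
Proof. intros Hx He; rewrite <- (Rpower_base_1 e); apply Rle_Rpower_l; lra. Qed.

Lemma Rpower_le_2_abs y e : 1/2 <= y <= 1 -> Rpower y e <= Rpower 2 (Rabs e).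
Proof.
  intros Hy; destruct (Rle_dec 0 e) as [He|He].
  - apply Rle_trans with 1; [now apply Rpower_le1; lra|].
    rewrite <- (Rpower_O 2) by lra; apply Rle_Rpower; [lra|apply Rabs_pos].
  - rewrite Rabs_left by lra.
    replace (Rpower y e) with (Rpower (/ y) (- e)).
    + apply Rle_Rpower_l; [lra|split; [apply Rinv_0_lt_compat; lra|]].
      apply (Rmult_le_reg_l y); [lra|]; rewrite Rinv_r; lra.
    + unfold Rpower; rewrite ln_Rinv by lra; f_equal; ring.
Qed.

Lemma is_derive_Rpower x e : 0 < x ->
  is_derive (fun y => Rpower y e) x (e * Rpower x (e - 1)).
Proof. intros; apply is_derive_Reals, derivable_pt_lim_power; assumption. Qed.

Lemma is_derive_Rpower_1m s e : s < 1 ->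
  is_derive (fun y => Rpower (1 - y) e) s (- (e * Rpower (1 - s) (e - 1))).
Proof.
  intros Hs; replace (- (e * Rpower (1 - s) (e - 1)))
    with (scal (-1) (e * Rpower (1 - s) (e - 1))) by (cbn; unfold mult; cbn; ring).
  apply (is_derive_comp (fun z => Rpower z e) (fun y => 1 - y)).
  - apply is_derive_Rpower; lra.
  - auto_derive; auto.
Qed.

Lemma continuous_Rpower x e : 0 < x -> continuous (fun y => Rpower y e) x.
Proof.
  intros; apply (@ex_derive_continuous R_AbsRing R_NormedModule).
  eexists; now apply is_derive_Rpower.
Qed.

Lemma continuous_Rpower_1m s e : s < 1 -> continuous (fun y => Rpower (1 - y) e) s.
Proof.
  intros; apply (@ex_derive_continuous R_AbsRing R_NormedModule).
  eexists; now apply is_derive_Rpower_1m.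
Qed.

(** * Improper integrals over (0, 1) *)

Lemma between_Rmin_Rmax a b u v z :
  a < u < b -> a < v < b -> Rmin u v <= z <= Rmax u v -> a < z < b.
Proof. unfold Rmin, Rmax; destruct Rle_dec; lra. Qed.

Definition continuous01 (g : R -> R) := forall x, 0 < x < 1 -> continuous g x.

(* [RInt] is total, so [is_RInt01] only carries information together with
   [continuous01], which every lemma below assumes. *)
Definition is_RInt01 (g : R -> R) (l : R) := forall eps, 0 < eps ->
  exists d, 0 < d /\ forall u v, 0 < u < d -> 1 - d < v < 1 -> Rabs (RInt g u v - l) < eps.

Lemma continuous01_plus g h :
  continuous01 g -> continuous01 h -> continuous01 (fun x => g x + h x).
Proof. intros Hg Hh x Hx; apply (continuous_plus g h); auto. Qed.

Lemma continuous01_mult g h :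
  continuous01 g -> continuous01 h -> continuous01 (fun x => g x * h x).
Proof. intros Hg Hh x Hx; apply (continuous_mult g h); auto. Qed.

Lemma continuous01_scal c g : continuous01 g -> continuous01 (fun x => c * g x).
Proof. intros Hg x Hx; apply (continuous_mult (fun _ => c) g); auto; apply continuous_const. Qed.

Lemma ex_RInt01 g u v : continuous01 g -> 0 < u < 1 -> 0 < v < 1 -> ex_RInt g u v.
Proof.
  intros Hg Hu Hv; apply (ex_RInt_continuous (V := R_CompleteNormedModule)).
  intros z Hz; apply Hg, (between_Rmin_Rmax 0 1 u v); auto.
Qed.

Lemma is_RInt01_shrink g l eps d0 : is_RInt01 g l -> 0 < eps -> 0 < d0 ->
  exists d, 0 < d <= d0 /\
    forall u v, 0 < u < d -> 1 - d < v < 1 -> Rabs (RInt g u v - l) < eps.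
Proof.
  intros Hl He Hd0; destruct (Hl eps He) as [d [Hd K]].
  exists (Rmin d d0); split; [split; [now apply Rmin_glb_lt|apply Rmin_r]|].
  intros u v Hu Hv; pose proof (Rmin_l d d0); apply K; lra.
Qed.

Lemma is_RInt01_unique g l1 l2 : is_RInt01 g l1 -> is_RInt01 g l2 -> l1 = l2.
Proof.
  intros H1 H2; apply NNPP; intro Hne.
  pose proof (Rabs_pos_lt (l1 - l2) ltac:(lra)) as Hgap.
  assert (Hpos : 0 < Rabs (l1 - l2) / 2) by lra.
  destruct (is_RInt01_shrink g l1 _ (1/2) H1 Hpos) as [d1 [Hd1 K1]]; [lra|].
  destruct (is_RInt01_shrink g l2 _ d1 H2 Hpos) as [d [Hd K2]]; [lra|].
  specialize (K1 (d/2) (1 - d/2) ltac:(lra) ltac:(lra)).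
  specialize (K2 (d/2) (1 - d/2) ltac:(lra) ltac:(lra)).
  set (I := RInt g (d/2) (1 - d/2)) in *.
  pose proof (Rabs_triang (l1 - I) (I - l2)); rewrite Rabs_minus_sym in K1.
  replace (l1 - I + (I - l2)) with (l1 - l2) in * by ring; lra.
Qed.

Lemma is_RInt01_plus g h lg lh : continuous01 g -> continuous01 h ->
  is_RInt01 g lg -> is_RInt01 h lh -> is_RInt01 (fun x => g x + h x) (lg + lh).
Proof.
  intros Cg Ch Hg Hh eps He.
  destruct (is_RInt01_shrink g lg (eps/2) (1/2) Hg) as [d1 [Hd1 K1]]; try lra.
  destruct (is_RInt01_shrink h lh (eps/2) d1 Hh) as [d [Hd K2]]; try lra.
  exists d; split; [lra|]; intros u v Hu Hv.
  rewrite (RInt_plus g h) by (apply ex_RInt01; auto; lra).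
  specialize (K1 u v ltac:(lra) ltac:(lra)); specialize (K2 u v ltac:(lra) ltac:(lra)).
  change (plus ?a ?b) with (a + b).
  pose proof (Rabs_triang (RInt g u v - lg) (RInt h u v - lh)).
  replace (RInt g u v - lg + (RInt h u v - lh)) with (RInt g u v + RInt h u v - (lg + lh))
    in * by ring; lra.
Qed.

Lemma is_RInt01_scal c g l : continuous01 g ->
  is_RInt01 g l -> is_RInt01 (fun x => c * g x) (c * l).
Proof.
  intros Cg Hg eps He; pose proof (Rabs_pos c).
  destruct (is_RInt01_shrink g l (eps / (Rabs c + 1)) (1/2) Hg) as [d [Hd K]];
    [apply Rdiv_lt_0_compat; lra|lra|].
  exists d; split; [lra|]; intros u v Hu Hv.
  replace (RInt (fun x => c * g x) u v) with (c * RInt g u v)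
    by (symmetry; apply (RInt_scal g u v c); apply ex_RInt01; auto; lra).
  specialize (K u v Hu Hv).
  replace (c * RInt g u v - c * l) with (c * (RInt g u v - l)) by ring.
  rewrite Rabs_mult; apply Rle_lt_trans with ((Rabs c + 1) * Rabs (RInt g u v - l)).
  - apply Rmult_le_compat_r; [apply Rabs_pos|lra].
  - apply (Rmult_lt_compat_l (Rabs c + 1)) in K; [|lra].
    replace ((Rabs c + 1) * (eps / (Rabs c + 1))) with eps in K by (field; lra); exact K.
Qed.

Lemma is_RInt01_ext g h l :
  (forall x, 0 < x < 1 -> g x = h x) -> is_RInt01 g l -> is_RInt01 h l.
Proof.
  intros E Hg eps He.
  destruct (is_RInt01_shrink g l eps (1/2) Hg He) as [d [Hd K]]; [lra|].
  exists d; split; [lra|]; intros u v Hu Hv.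
  rewrite <- (RInt_ext g h); [now apply K|].
  intros x Hx; apply E, (between_Rmin_Rmax 0 1 u v); lra.
Qed.

Lemma is_lub_approx (E : R -> Prop) m eps :
  is_lub E m -> 0 < eps -> exists y, E y /\ m - eps < y.
Proof.
  intros [Hub Hleast] He; apply NNPP; intro Hno.
  assert (Hb : is_upper_bound E (m - eps)).
  { intros y Hy; apply Rnot_lt_le; intro Hlt; apply Hno; now exists y. }
  specialize (Hleast _ Hb); lra.
Qed.

Lemma RInt_nonneg_widen g a b c d : continuous01 g ->
  (forall x, 0 < x < 1 -> 0 <= g x) -> 0 < a <= b -> b <= c -> c <= d < 1 ->
  RInt g b c <= RInt g a d.
Proof.
  intros Cg Pg Hab Hbc Hcd.
  assert (Ex : forall u v, 0 < u -> u <= v -> v < 1 -> ex_RInt g u v)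
    by (intros; apply ex_RInt01; auto; lra).
  assert (Pos : forall u v, 0 < u -> u <= v -> v < 1 -> 0 <= RInt g u v)
    by (intros; apply RInt_ge_0; auto; intros; apply Pg; lra).
  rewrite <- (RInt_Chasles g a b d), <- (RInt_Chasles g b c d) by (apply Ex; lra).
  repeat change (plus ?x ?y) with (x + y).
  pose proof (Pos a b ltac:(lra) ltac:(lra) ltac:(lra));
  pose proof (Pos c d ltac:(lra) ltac:(lra) ltac:(lra)); lra.
Qed.

(* The integrals over [u, 1/2] and [1/2, v] grow as u -> 0 and v -> 1;
   their suprema add up to the improper integral. *)
Lemma is_RInt01_of_nonneg_bounded g K : continuous01 g ->
  (forall x, 0 < x < 1 -> 0 <= g x) ->
  (forall u v, 0 < u -> u <= v -> v < 1 -> RInt g u v <= K) ->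
  exists l, is_RInt01 g l.
Proof.
  intros Cg Pg Bg.
  set (E1 := fun y => exists u, 0 < u <= 1/2 /\ y = RInt g u (1/2)).
  set (E2 := fun y => exists v, 1/2 <= v < 1 /\ y = RInt g (1/2) v).
  destruct (completeness E1) as [L1 HL1].
  { exists K; intros y [u [Hu ->]]; apply Bg; lra. }
  { exists (RInt g (1/2) (1/2)), (1/2); split; [lra|reflexivity]. }
  destruct (completeness E2) as [L2 HL2].
  { exists K; intros y [v [Hv ->]]; apply Bg; lra. }
  { exists (RInt g (1/2) (1/2)), (1/2); split; [lra|reflexivity]. }
  exists (L1 + L2); intros eps He.
  destruct (is_lub_approx E1 L1 (eps/2) HL1) as [y1 [[u0 [Hu0 ->]] Hy1]]; [lra|].
  destruct (is_lub_approx E2 L2 (eps/2) HL2) as [y2 [[v0 [Hv0 ->]] Hy2]]; [lra|].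
  exists (Rmin u0 (1 - v0)); split; [apply Rmin_glb_lt; lra|]; intros u v Hu Hv.
  pose proof (Rmin_l u0 (1 - v0)); pose proof (Rmin_r u0 (1 - v0)).
  assert (C1 : RInt g u (1/2) <= L1) by (apply HL1; exists u; split; [lra|reflexivity]).
  assert (C2 : RInt g (1/2) v <= L2) by (apply HL2; exists v; split; [lra|reflexivity]).
  assert (C3 := RInt_nonneg_widen g u u0 (1/2) (1/2) Cg Pg ltac:(lra) ltac:(lra) ltac:(lra)).
  assert (C4 := RInt_nonneg_widen g (1/2) (1/2) v0 v Cg Pg ltac:(lra) ltac:(lra) ltac:(lra)).
  rewrite <- (RInt_Chasles g u (1/2) v) by (apply ex_RInt01; auto; lra).
  change (plus ?x ?y) with (x + y); apply Rabs_def1; lra.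
Qed.

Lemma improper_int_0_1_of_is_RInt01 g l :
  continuous01 g -> is_RInt01 g l -> improper_int_0_1 g l.
Proof.
  intros Cg Hl; split.
  - intros u v Hu Huv Hv; constructor; apply ex_RInt_Reals_0, ex_RInt01; auto; lra.
  - intros eps He; destruct (Hl eps He) as [d [Hd K]]; exists d; split; auto.
    intros u v pr Hu Hv; rewrite <- RInt_Reals; now apply K.
Qed.

(** * The Beta integral *)

Definition beta_kernel (p q s : R) := Rpower s (p - 1) * Rpower (1 - s) (q - 1).

Lemma beta_kernel_gt0 p q s : 0 < beta_kernel p q s.
Proof. apply Rmult_lt_0_compat; apply Rpower_gt0. Qed.

Lemma continuous01_beta_kernel p q : continuous01 (beta_kernel p q).
Proof.
  intros x Hx; apply (continuous_mult (fun s => Rpower s (p - 1)) (fun s => Rpower (1 - s) (q - 1))).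
  - apply continuous_Rpower; lra.
  - apply continuous_Rpower_1m; lra.
Qed.

Lemma beta_kernel_le p q s : 0 < s < 1 ->
  beta_kernel p q s <=
  Rpower 2 (Rabs (p - 1) + Rabs (q - 1)) * (Rpower s (p - 1) + Rpower (1 - s) (q - 1)).
Proof.
  intros Hs; unfold beta_kernel.
  pose proof (Rpower_gt0 s (p - 1)); pose proof (Rpower_gt0 (1 - s) (q - 1)).
  assert (Hp : Rpower 2 (Rabs (p - 1)) <= Rpower 2 (Rabs (p - 1) + Rabs (q - 1)))
    by (apply Rle_Rpower; [lra|pose proof (Rabs_pos (q - 1)); lra]).
  assert (Hq : Rpower 2 (Rabs (q - 1)) <= Rpower 2 (Rabs (p - 1) + Rabs (q - 1)))
    by (apply Rle_Rpower; [lra|pose proof (Rabs_pos (p - 1)); lra]).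
  destruct (Rle_dec s (1/2)).
  - pose proof (Rpower_le_2_abs (1 - s) (q - 1) ltac:(lra)); nra.
  - pose proof (Rpower_le_2_abs s (p - 1) ltac:(lra)); nra.
Qed.

Lemma is_RInt_Rpower_sum p q u v : 0 < p -> 0 < q -> 0 < u < 1 -> 0 < v < 1 ->
  is_RInt (fun s => Rpower s (p - 1) + Rpower (1 - s) (q - 1)) u v
    ((Rpower v p - Rpower u p) / p + (Rpower (1 - u) q - Rpower (1 - v) q) / q).
Proof.
  intros Hp Hq Hu Hv.
  set (F := fun s => / p * Rpower s p + (- / q) * Rpower (1 - s) q).
  replace ((Rpower v p - Rpower u p) / p + (Rpower (1 - u) q - Rpower (1 - v) q) / q)
    with (minus (F v) (F u)) by (unfold F, minus, plus, opp; cbn; field; lra).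
  apply (is_RInt_derive F); intros x Hx;
    pose proof (between_Rmin_Rmax 0 1 u v x Hu Hv Hx).
  - replace (Rpower x (p - 1) + Rpower (1 - x) (q - 1))
      with (/ p * (p * Rpower x (p - 1)) + (- / q) * (- (q * Rpower (1 - x) (q - 1))))
      by (field; lra).
    apply (is_derive_plus (fun s => / p * Rpower s p) (fun s => (- / q) * Rpower (1 - s) q));
      apply is_derive_scal.
    + apply is_derive_Rpower; lra.
    + apply is_derive_Rpower_1m; lra.
  - apply (continuous_plus (fun s => Rpower s (p - 1)) (fun s => Rpower (1 - s) (q - 1))).
    + apply continuous_Rpower; lra.
    + apply continuous_Rpower_1m; lra.
Qed.

Lemma ex_is_RInt01_beta_kernel p q : 0 < p -> 0 < q ->
  exists B, is_RInt01 (beta_kernel p q) B.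
Proof.
  intros Hp Hq; set (C := Rpower 2 (Rabs (p - 1) + Rabs (q - 1))).
  apply (is_RInt01_of_nonneg_bounded _ (C * (1/p + 1/q))).
  - apply continuous01_beta_kernel.
  - intros; left; apply beta_kernel_gt0.
  - intros u v Hu Huv Hv.
    pose proof (is_RInt_Rpower_sum p q u v Hp Hq ltac:(lra) ltac:(lra)) as HI.
    apply Rle_trans with (RInt (fun s => C * (Rpower s (p - 1) + Rpower (1 - s) (q - 1))) u v).
    + apply RInt_le; auto.
      * apply ex_RInt01; [apply continuous01_beta_kernel|lra|lra].
      * apply (ex_RInt_scal (V := R_NormedModule)); eexists; exact HI.
      * intros; apply beta_kernel_le; lra.
    + rewrite (RInt_scal (V := R_CompleteNormedModule)) by (eexists; exact HI).
      rewrite (is_RInt_unique _ _ _ _ HI); change (scal C ?a) with (C * a).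
      assert (0 < C) by apply Rpower_gt0; apply Rmult_le_compat_l; [lra|].
      pose proof (Rpower_le1 v p ltac:(lra) ltac:(lra)).
      pose proof (Rpower_le1 (1 - u) q ltac:(lra) ltac:(lra)).
      pose proof (Rpower_gt0 u p); pose proof (Rpower_gt0 (1 - v) q).
      assert ((Rpower v p - Rpower u p) / p <= 1 / p)
        by (apply Rmult_le_compat_r; [left; apply Rinv_0_lt_compat|]; lra).
      assert ((Rpower (1 - u) q - Rpower (1 - v) q) / q <= 1 / q)
        by (apply Rmult_le_compat_r; [left; apply Rinv_0_lt_compat|]; lra).
      lra.
Qed.

Lemma beta_kernel_split p q s : 0 < s < 1 ->
  beta_kernel p q s = beta_kernel p (q + 1) s + beta_kernel (p + 1) q s.
Proof.
  intros Hs; unfold beta_kernel.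
  replace (q + 1 - 1) with ((q - 1) + 1) by ring.
  replace (p + 1 - 1) with ((p - 1) + 1) by ring.
  rewrite !Rpower_plus, !Rpower_1 by lra; ring.
Qed.

Lemma is_RInt_beta_kernel_boundary p q u v : 0 < u < 1 -> 0 < v < 1 ->
  is_RInt (fun s => p * beta_kernel p (q + 1) s + (- q) * beta_kernel (p + 1) q s) u v
    (Rpower v p * Rpower (1 - v) q - Rpower u p * Rpower (1 - u) q).
Proof.
  intros Hu Hv; set (G := fun s => Rpower s p * Rpower (1 - s) q).
  apply (is_RInt_derive G); intros x Hx;
    pose proof (between_Rmin_Rmax 0 1 u v x Hu Hv Hx).
  - unfold beta_kernel; replace (q + 1 - 1) with q by ring; replace (p + 1 - 1) with p by ring.
    replace (p * (Rpower x (p - 1) * Rpower (1 - x) q) + - q * (Rpower x p * Rpower (1 - x) (q - 1)))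
      with (p * Rpower x (p - 1) * Rpower (1 - x) q + Rpower x p * - (q * Rpower (1 - x) (q - 1)))
      by ring.
    apply (is_derive_mult (fun s => Rpower s p) (fun s => Rpower (1 - s) q)).
    + apply is_derive_Rpower; lra.
    + apply is_derive_Rpower_1m; lra.
    + intros; apply Rmult_comm.
  - apply (continuous01_plus (fun s => p * beta_kernel p (q + 1) s)
                             (fun s => (- q) * beta_kernel (p + 1) q s));
      auto; apply continuous01_scal, continuous01_beta_kernel.
Qed.

Lemma Rpower_lt_of_lt_root x a e : 0 < e -> 0 < x < Rpower a (/ e) -> 0 < a ->
  Rpower x e < a.
Proof.
  intros He Hx Ha; rewrite <- (Rpower_1 a) by lra.
  replace 1 with (/ e * e) by (field; lra); rewrite <- Rpower_mult.
  now apply Rlt_Rpower_l.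
Qed.

(* Integration by parts: the boundary term s^p (1-s)^q vanishes at 0 and 1. *)
Lemma is_RInt01_beta_kernel_boundary p q : 0 < p -> 0 < q ->
  is_RInt01 (fun s => p * beta_kernel p (q + 1) s + (- q) * beta_kernel (p + 1) q s) 0.
Proof.
  intros Hp Hq eps He.
  set (d := Rmin (Rmin (Rpower (eps/2) (/ p)) (Rpower (eps/2) (/ q))) (1/2)).
  assert (Hd : 0 < d) by (repeat apply Rmin_glb_lt; try apply Rpower_gt0; lra).
  assert (Hdp : d <= Rpower (eps/2) (/ p)) by (eapply Rle_trans; apply Rmin_l).
  assert (Hdq : d <= Rpower (eps/2) (/ q))
    by (eapply Rle_trans; [apply Rmin_l|apply Rmin_r]).
  assert (Hdh : d <= 1/2) by apply Rmin_r.
  exists d; split; auto; intros u v Hu Hv.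
  rewrite (is_RInt_unique _ _ _ _ (is_RInt_beta_kernel_boundary p q u v ltac:(lra) ltac:(lra))).
  pose proof (Rpower_le1 v p ltac:(lra) ltac:(lra)); pose proof (Rpower_gt0 v p).
  pose proof (Rpower_le1 (1 - u) q ltac:(lra) ltac:(lra)); pose proof (Rpower_gt0 (1 - u) q).
  pose proof (Rpower_gt0 u p); pose proof (Rpower_gt0 (1 - v) q).
  pose proof (Rpower_lt_of_lt_root u (eps/2) p Hp ltac:(lra) ltac:(lra)).
  pose proof (Rpower_lt_of_lt_root (1 - v) (eps/2) q Hq ltac:(lra) ltac:(lra)).
  apply Rabs_def1; nra.
Qed.

Lemma is_RInt01_beta_kernel_succ p q B : 0 < p -> 0 < q ->
  is_RInt01 (beta_kernel p q) B -> is_RInt01 (beta_kernel p (q + 1)) (B * q / (p + q)).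
Proof.
  intros Hp Hq HB.
  destruct (ex_is_RInt01_beta_kernel p (q + 1)) as [X HX]; try lra.
  destruct (ex_is_RInt01_beta_kernel (p + 1) q) as [Y HY]; try lra.
  pose proof (continuous01_beta_kernel p (q + 1)) as CX.
  pose proof (continuous01_beta_kernel (p + 1) q) as CY.
  assert (Hsum : B = X + Y).
  { apply (is_RInt01_unique (beta_kernel p q)); auto.
    apply (is_RInt01_ext (fun s => beta_kernel p (q + 1) s + beta_kernel (p + 1) q s)).
    - intros; symmetry; now apply beta_kernel_split.
    - now apply is_RInt01_plus. }
  assert (Hparts : p * X + (- q) * Y = 0).
  { apply (is_RInt01_unique
      (fun s => p * beta_kernel p (q + 1) s + (- q) * beta_kernel (p + 1) q s)).
    - apply (is_RInt01_plus (fun s => p * beta_kernel p (q + 1) s)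
                            (fun s => (- q) * beta_kernel (p + 1) q s));
        try apply continuous01_scal; try apply is_RInt01_scal; auto.
    - now apply is_RInt01_beta_kernel_boundary. }
  replace (B * q / (p + q)) with X; auto.
  subst B; field_simplify_eq; nra.
Qed.

Lemma poch_gt0 a k : 0 < a -> 0 < poch a k.
Proof.
  intros Ha; induction k as [|k IH]; simpl; [lra|].
  pose proof (pos_INR k); nra.
Qed.

Lemma is_RInt01_beta_kernel_shift p q B k : 0 < p -> 0 < q ->
  is_RInt01 (beta_kernel p q) B ->
  is_RInt01 (beta_kernel p (q + INR k)) (B * poch q k / poch (p + q) k).
Proof.
  intros Hp Hq HB; induction k as [|k IH].
  - simpl; replace (q + 0) with q by ring; replace (B * 1 / 1) with B by field; auto.
  - pose proof (pos_INR k); pose proof (poch_gt0 (p + q) k ltac:(lra)).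
    replace (q + INR (S k)) with ((q + INR k) + 1) by (rewrite S_INR; ring).
    replace (B * poch q (S k) / poch (p + q) (S k))
      with (B * poch q k / poch (p + q) k * (q + INR k) / (p + (q + INR k)))
      by (simpl; field; lra).
    apply is_RInt01_beta_kernel_succ; auto; lra.
Qed.

(** * The binomial series *)

Lemma ex_series_Rabs_ratio (a : nat -> R) c K : 0 <= c < 1 ->
  (forall m, (K <= m)%nat -> Rabs (a (S m)) <= c * Rabs (a m)) ->
  ex_series (fun n => Rabs (a n)).
Proof.
  intros Hc Hratio.
  assert (Geo : forall j, Rabs (a (K + j)%nat) <= Rabs (a K) * c ^ j).
  { induction j as [|j IH]; [rewrite Nat.add_0_r; simpl; lra|].
    replace (K + S j)%nat with (S (K + j)) by lia; simpl pow.
    eapply Rle_trans; [apply Hratio; lia|].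
    replace (Rabs (a K) * (c * c ^ j)) with (c * (Rabs (a K) * c ^ j)) by ring.
    apply Rmult_le_compat_l; lra. }
  apply (ex_series_incr_n _ K).
  apply (ex_series_le (K := R_AbsRing) (V := R_CompleteNormedModule) _
           (fun j => Rabs (a K) * c ^ j)).
  - intros j; change (norm ?x) with (Rabs x); rewrite Rabs_Rabsolu; apply Geo.
  - apply (ex_series_scal (V := R_NormedModule)), ex_series_geom; rewrite Rabs_right; lra.
Qed.

(* Coefficients of the binomial series (1 - z)^al = sum_k (-al)_k / k! z^k. *)
Definition binom_coef (al : R) (k : nat) := poch (- al) k / INR (fact k).

Lemma INR_fact_gt0 k : 0 < INR (fact k).
Proof. apply lt_0_INR, lt_O_fact. Qed.

Lemma binom_coef_S al k : binom_coef al (S k) = binom_coef al k * (- al + INR k) / INR (S k).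
Proof.
  unfold binom_coef; simpl poch; rewrite fact_simpl, mult_INR.
  pose proof (INR_fact_gt0 k); assert (0 < INR (S k)) by (apply lt_0_INR; lia).
  field; lra.
Qed.

Lemma CV_radius_binom_coef al : Rbar_le (3/4) (CV_radius (binom_coef al)).
Proof.
  apply (proj1 (Lub_Rbar_correct (CV_disk (binom_coef al)))).
  destruct (INR_unbounded (4 * Rabs al)) as [K HK].
  apply (ex_series_Rabs_ratio _ (15/16) K); [lra|intros m Hm].
  apply le_INR in Hm; pose proof (pos_INR m); pose proof (Rabs_pos al).
  rewrite binom_coef_S, S_INR; simpl pow.
  replace (binom_coef al m * (- al + INR m) / (INR m + 1) * (3 / 4 * (3 / 4) ^ m))
    with ((- al + INR m) / (INR m + 1) * (3 / 4) * (binom_coef al m * (3 / 4) ^ m))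
    by (field; lra).
  rewrite Rabs_mult; apply Rmult_le_compat_r; [apply Rabs_pos|].
  rewrite Rabs_mult, (Rabs_right (3/4)), Rabs_div, (Rabs_right (INR m + 1)) by lra.
  apply (Rmult_le_reg_r (4/3)); [lra|].
  apply (Rmult_le_reg_r (INR m + 1)); [lra|].
  replace (Rabs (- al + INR m) / (INR m + 1) * (3 / 4) * (4 / 3) * (INR m + 1))
    with (Rabs (- al + INR m)) by (field; lra).
  pose proof (Rabs_triang (- al) (INR m)) as Htri.
  rewrite Rabs_Ropp, (Rabs_right (INR m)) in Htri by lra; lra.
Qed.

Lemma Rbar_lt_CV_radius_binom_coef al z : Rabs z < 3/4 ->
  Rbar_lt (Rabs z) (CV_radius (binom_coef al)).
Proof.
  intros Hz; pose proof (CV_radius_binom_coef al).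
  destruct (CV_radius (binom_coef al)); simpl in *; auto; lra.
Qed.

Lemma ex_series_binom_coef al z : Rabs z < 3/4 ->
  ex_series (fun k => binom_coef al k * z ^ k).
Proof.
  intros Hz; apply ex_series_Rabs, CV_disk_inside; now apply Rbar_lt_CV_radius_binom_coef.
Qed.

Lemma PS_derive_binom_coef al k :
  PS_derive (binom_coef al) k = binom_coef al k * (- al + INR k).
Proof.
  unfold PS_derive; rewrite binom_coef_S.
  assert (0 < INR (S k)) by (apply lt_0_INR; lia); field; lra.
Qed.

Lemma binom_series_ode al y : Rabs y < 3/4 ->
  (1 - y) * PSeries (PS_derive (binom_coef al)) y = - al * PSeries (binom_coef al) y.
Proof.
  intros Hy; set (c := binom_coef al).
  assert (Ec : ex_series (fun k => c k * y ^ k)) by now apply ex_series_binom_coef.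
  assert (Ed : ex_series (fun k => c k * (- al + INR k) * y ^ k)).
  { apply (ex_series_ext (fun k => PS_derive c k * y ^ k));
      [intros; unfold c; now rewrite PS_derive_binom_coef|].
    apply ex_series_Rabs, CV_disk_inside; rewrite CV_radius_derive.
    now apply Rbar_lt_CV_radius_binom_coef. }
  (* k c_k = (k - 1 - al) c_(k-1): multiplying by y shifts the derived series. *)
  assert (Hshift : y * PSeries (PS_derive c) y
                   = PSeries (fun k => c k * (- al + INR k) + al * c k) y).
  { rewrite <- PSeries_incr_1; apply PSeries_ext; intros [|n]; simpl.
    - unfold zero; simpl; ring.
    - unfold c; rewrite PS_derive_binom_coef, binom_coef_S.
      change (match n with 0%nat => 1 | S _ => INR n + 1 end) with (INR (S n)).
      assert (0 < INR (S n)) by (apply lt_0_INR; lia); rewrite S_INR in *; field; lra. }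
  rewrite Rmult_minus_distr_r, Rmult_1_l, Hshift.
  rewrite (PSeries_ext (PS_derive c) (fun k => c k * (- al + INR k)))
    by (intros; apply PS_derive_binom_coef).
  unfold PSeries.
  rewrite (Series_ext (fun k => (c k * (- al + INR k) + al * c k) * y ^ k) (fun k => c k * (- al + INR k) * y ^ k + al * (c k * y ^ k)))
    by (intros; ring).
  rewrite Series_plus, Series_scal_l by (auto; now apply (ex_series_scal (V := R_NormedModule))).
  ring.
Qed.

(* (1 - y)^(-al) times the series has derivative 0 by the ODE, and equals 1 at 0. *)
Lemma PSeries_binom_coef al z : Rabs z < 3/4 -> PSeries (binom_coef al) z = Rpower (1 - z) al.
Proof.
  intros Hz; set (S := PSeries (binom_coef al)).
  set (D := fun y => S y * Rpower (1 - y) (- al)).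
  assert (HD : forall y, Rabs y < 3/4 -> is_derive D y 0).
  { intros y Hy; assert (y < 1) by (apply Rabs_def2 in Hy; lra).
    replace 0 with (PSeries (PS_derive (binom_coef al)) y * Rpower (1 - y) (- al)
                    + S y * (- (- al * Rpower (1 - y) (- al - 1)))).
    - apply (is_derive_mult S (fun y => Rpower (1 - y) (- al))).
      + now apply is_derive_PSeries, Rbar_lt_CV_radius_binom_coef.
      + now apply is_derive_Rpower_1m.
      + intros; apply Rmult_comm.
    - replace (- al) with ((- al - 1) + 1) at 1 by ring.
      rewrite Rpower_plus, Rpower_1 by lra.
      transitivity (Rpower (1 - y) (- al - 1)
        * ((1 - y) * PSeries (PS_derive (binom_coef al)) y + al * S y)); [ring|].
      rewrite binom_series_ode by auto; unfold S; ring. }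
  assert (Hin : forall x, Rmin 0 z <= x <= Rmax 0 z -> Rabs x < 3/4).
  { intros x Hx; apply Rabs_def1; apply Rabs_def2 in Hz;
      unfold Rmin, Rmax in Hx; destruct Rle_dec; lra. }
  destruct (MVT_gen D 0 z (fun _ => 0)) as [c [_ Hmvt]].
  - intros x Hx; apply HD, Hin; lra.
  - intros x Hx; apply continuity_pt_filterlim, (@ex_derive_continuous R_AbsRing R_NormedModule).
    eexists; apply HD, Hin, Hx.
  - assert (D0 : D 0 = 1).
    { unfold D, S; rewrite PSeries_0; unfold binom_coef; simpl.
      rewrite Rminus_0_r, Rpower_base_1; field. }
    assert (Dz : D z = 1) by lra; unfold D in Dz.
    assert (z < 1) by (apply Rabs_def2 in Hz; lra).
    transitivity (S z * Rpower (1 - z) (- al) * Rpower (1 - z) al); [|rewrite Dz; ring].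
    rewrite Rmult_assoc, <- Rpower_plus, Rplus_opp_l, Rpower_O by lra; ring.
Qed.

(** * Term-by-term integration *)

Definition Rabs_tail (a : nat -> R) (n : nat) := Series (fun k => Rabs (a (S n + k)%nat)).

Lemma Rabs_tail_eq a n : ex_series (fun k => Rabs (a k)) ->
  Rabs_tail a n = Series (fun k => Rabs (a k)) - sum_f_R0 (fun k => Rabs (a k)) n.
Proof.
  intros Ea; rewrite (Series_incr_n (fun k => Rabs (a k)) (S n)) by (auto; lia).
  unfold Rabs_tail; simpl Nat.pred; ring.
Qed.

Lemma Un_cv_Rabs_tail a : ex_series (fun k => Rabs (a k)) -> Un_cv (Rabs_tail a) 0.
Proof.
  intros Ea eps He.
  destruct (proj1 (is_series_Reals _ _) (Series_correct _ Ea) eps He) as [N HN].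
  exists N; intros n Hn; specialize (HN n Hn); unfold R_dist in *.
  rewrite Rabs_tail_eq, Rminus_0_r by auto.
  rewrite Rabs_minus_sym in HN; exact HN.
Qed.

Lemma is_series_sub_sum_le (a b : nat -> R) l n :
  is_series b l -> ex_series (fun k => Rabs (a k)) -> (forall k, Rabs (b k) <= Rabs (a k)) ->
  Rabs (l - sum_f_R0 b n) <= Rabs_tail a n.
Proof.
  intros Hb Ea Hba.
  assert (Eb : ex_series b) by (eexists; eauto).
  assert (Eta : ex_series (fun k => Rabs (a (S n + k)%nat)))
    by now apply (ex_series_incr_n (fun k => Rabs (a k))).
  assert (Etb : ex_series (fun k => Rabs (b (S n + k)%nat))).
  { apply (ex_series_le (K := R_AbsRing) (V := R_CompleteNormedModule) _
             (fun k => Rabs (a (S n + k)%nat))); [|exact Eta].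
    intros k; change (norm ?x) with (Rabs x); rewrite Rabs_Rabsolu; apply Hba. }
  rewrite <- (is_series_unique _ _ Hb), (Series_incr_n b (S n)) by (auto; lia).
  simpl Nat.pred; replace (_ + _ - _) with (Series (fun k => b (S n + k)%nat)) by ring.
  eapply Rle_trans; [now apply Series_Rabs|].
  apply Series_le; auto; intros; split; [apply Rabs_pos|apply Hba].
Qed.

Lemma RInt_Rabs_sub_le h g w T u v : 0 < u <= v -> v < 1 ->
  continuous01 h -> continuous01 g -> continuous01 w ->
  (forall s, 0 < s < 1 -> Rabs (h s - g s) <= T * w s) ->
  Rabs (RInt h u v - RInt g u v) <= T * RInt w u v.
Proof.
  intros Hu Hv Ch Cg Cw Hb.
  assert (Ex : forall f, continuous01 f -> ex_RInt f u v) by (intros; apply ex_RInt01; auto; lra).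
  assert (Cd : continuous01 (fun s => h s - g s)).
  { intros s Hs; apply (continuous_minus h g); auto. }
  rewrite <- (RInt_scal (V := R_CompleteNormedModule)) by auto.
  replace (RInt h u v - RInt g u v) with (RInt (fun s => h s - g s) u v)
    by (apply (RInt_minus (V := R_CompleteNormedModule)); auto).
  eapply Rle_trans; [apply abs_RInt_le; [lra|auto]|].
  apply RInt_le; [lra| |apply (ex_RInt_scal (V := R_NormedModule)); auto|].
  - apply (ex_RInt_continuous (V := R_CompleteNormedModule)); intros z Hz.
    apply (continuous_comp (fun s => h s - g s) Rabs); [apply Cd|apply continuous_Rabs].
    apply (between_Rmin_Rmax 0 1 u v); auto; lra.
  - intros s Hs; apply Hb; lra.
Qed.

Lemma is_RInt01_approx h w W (g : nat -> R -> R) (c T : nat -> R) L :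
  continuous01 h -> continuous01 w -> (forall n, continuous01 (g n)) ->
  (forall s, 0 < s < 1 -> 0 <= w s) -> is_RInt01 w W ->
  (forall n, is_RInt01 (g n) (c n)) -> Un_cv c L -> Un_cv T 0 ->
  (forall n s, 0 < s < 1 -> Rabs (h s - g n s) <= T n * w s) ->
  is_RInt01 h L.
Proof.
  intros Ch Cw Cg Pw HW Hg Hc HT Happrox eps He.
  assert (HW1 : 0 < Rabs W + 1) by (pose proof (Rabs_pos W); lra).
  destruct (HT (eps / 3 / (Rabs W + 1))) as [N1 HN1]; [apply Rdiv_lt_0_compat; lra|].
  destruct (Hc (eps / 3)) as [N2 HN2]; [lra|].
  set (n := Nat.max N1 N2).
  specialize (HN1 n ltac:(lia)); specialize (HN2 n ltac:(lia)); unfold R_dist in *.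
  rewrite Rminus_0_r in HN1.
  destruct (is_RInt01_shrink w W 1 (1/2) HW) as [d0 [Hd0 K0]]; try lra.
  destruct (is_RInt01_shrink (g n) (c n) (eps / 3) d0 (Hg n)) as [d [Hd K]]; try lra.
  exists d; split; [lra|]; intros u v Hu Hv.
  specialize (K u v Hu Hv); specialize (K0 u v ltac:(lra) ltac:(lra)).
  assert (Hw : 0 <= RInt w u v <= Rabs W + 1).
  { split; [apply RInt_ge_0; [lra|apply ex_RInt01; auto; lra|intros; apply Pw; lra]|].
    apply Rabs_def2 in K0; pose proof (Rle_abs W); lra. }
  pose proof (RInt_Rabs_sub_le h (g n) w (T n) u v ltac:(lra) ltac:(lra) Ch (Cg n) Cw
                (Happrox n)) as Hhg.
  assert (Hsmall : T n * RInt w u v < eps / 3).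
  { apply Rle_lt_trans with (Rabs (T n) * (Rabs W + 1)).
    - pose proof (Rle_abs (T n)); pose proof (Rabs_pos (T n)); nra.
    - apply (Rmult_lt_compat_r (Rabs W + 1)) in HN1; [|lra].
      replace (eps / 3 / (Rabs W + 1) * (Rabs W + 1)) with (eps / 3) in HN1 by (field; lra).
      exact HN1. }
  apply Rabs_def2 in K; apply Rabs_def2 in HN2; apply Rabs_le_between' in Hhg.
  apply Rabs_def1; lra.
Qed.

Definition binom_half (al : R) (k : nat) := binom_coef al k * (1/2) ^ k.

Lemma ex_series_Rabs_binom_half al : ex_series (fun k => Rabs (binom_half al k)).
Proof.
  apply CV_disk_inside, Rbar_lt_CV_radius_binom_coef; rewrite Rabs_right; lra.
Qed.

Lemma is_series_binom_half al s : 0 < s < 1 ->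
  is_series (fun k => binom_half al k * (1 - s) ^ k) (Rpower ((1 + s) / 2) al).
Proof.
  intros Hs; assert (Hz : Rabs ((1 - s) / 2) < 3/4) by (rewrite Rabs_right; lra).
  pose proof (Series_correct _ (ex_series_binom_coef al _ Hz)) as Hc.
  change (Series _) with (PSeries (binom_coef al) ((1 - s) / 2)) in Hc.
  rewrite PSeries_binom_coef in Hc by auto.
  replace ((1 + s) / 2) with (1 - (1 - s) / 2) by field.
  eapply is_series_ext; [|exact Hc]; intros k; simpl; unfold binom_half.
  replace ((1 - s) / 2) with (1/2 * (1 - s)) by field; rewrite Rpow_mult_distr; ring.
Qed.

Lemma beta_kernel_shift p q k s : 0 < s < 1 ->
  beta_kernel p (q + INR k) s = beta_kernel p q s * (1 - s) ^ k.
Proof.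
  intros Hs; unfold beta_kernel; replace (q + INR k - 1) with ((q - 1) + INR k) by ring.
  rewrite Rpower_plus, Rpower_pow by lra; ring.
Qed.

Definition euler_partial p q al n s :=
  sum_f_R0 (fun k => binom_half al k * beta_kernel p (q + INR k) s) n.

Lemma euler_partial_eq p q al n s : 0 < s < 1 ->
  euler_partial p q al n s = beta_kernel p q s * sum_f_R0 (fun k => binom_half al k * (1 - s) ^ k) n.
Proof.
  intros Hs; unfold euler_partial; induction n as [|n IH]; cbn [sum_f_R0];
    rewrite ?IH, beta_kernel_shift by auto; ring.
Qed.

Lemma continuous01_euler_partial p q al n : continuous01 (euler_partial p q al n).
Proof.
  induction n as [|n IH]; unfold euler_partial; simpl.
  - apply continuous01_scal, continuous01_beta_kernel.
  - apply continuous01_plus; [exact IH|apply continuous01_scal, continuous01_beta_kernel].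
Qed.

Lemma is_RInt01_euler_partial p q al B n : 0 < p -> 0 < q ->
  is_RInt01 (beta_kernel p q) B ->
  is_RInt01 (euler_partial p q al n)
    (sum_f_R0 (fun k => binom_half al k * (B * poch q k / poch (p + q) k)) n).
Proof.
  intros Hp Hq HB; induction n as [|n IH]; simpl.
  - apply is_RInt01_scal; [apply continuous01_beta_kernel|].
    now apply (is_RInt01_beta_kernel_shift p q B 0).
  - apply (is_RInt01_plus (euler_partial p q al n)); auto.
    + apply continuous01_euler_partial.
    + apply continuous01_scal, continuous01_beta_kernel.
    + apply is_RInt01_scal; [apply continuous01_beta_kernel|].
      now apply is_RInt01_beta_kernel_shift.
Qed.

Lemma poch_le a c k : 0 < a <= c -> poch a k <= poch c k.
Proof.
  intros Hac; induction k as [|k IH]; simpl; [lra|].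
  pose proof (pos_INR k); pose proof (poch_gt0 a k ltac:(lra)); nra.
Qed.

Lemma poch_ratio_le1 q c k : 0 < q <= c -> 0 < poch q k / poch c k <= 1.
Proof.
  intros Hqc; pose proof (poch_gt0 c k ltac:(lra)); pose proof (poch_le q c k Hqc).
  split; [apply Rdiv_lt_0_compat; [now apply poch_gt0|lra]|].
  apply (Rmult_le_reg_r (poch c k)); [lra|]; unfold Rdiv.
  rewrite Rmult_assoc, Rinv_l; lra.
Qed.

Lemma continuous01_euler_integrand p q al :
  continuous01 (fun s => beta_kernel p q s * Rpower ((1 + s) / 2) al).
Proof.
  apply continuous01_mult; [apply continuous01_beta_kernel|].
  intros x Hx; apply (continuous_comp (fun s => (1 + s) / 2) (fun y => Rpower y al)).
  - apply (@ex_derive_continuous R_AbsRing R_NormedModule); eexists; auto_derive; auto.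
  - apply continuous_Rpower; lra.
Qed.

Lemma ex_series_binom_half_poch_ratio al q c : 0 < q <= c ->
  ex_series (fun k => binom_half al k * (poch q k / poch c k)).
Proof.
  intros Hqc; apply ex_series_Rabs.
  apply (ex_series_le (K := R_AbsRing) (V := R_CompleteNormedModule) _
           (fun k => Rabs (binom_half al k))); [|apply ex_series_Rabs_binom_half].
  intros k; change (norm ?x) with (Rabs x); rewrite Rabs_Rabsolu, Rabs_mult.
  pose proof (poch_ratio_le1 q c k Hqc); rewrite (Rabs_right (_ / _)) by lra.
  pose proof (Rabs_pos (binom_half al k)); nra.
Qed.

Lemma Rabs_sub_euler_partial_le p q al n s : 0 < s < 1 ->
  Rabs (beta_kernel p q s * Rpower ((1 + s) / 2) al - euler_partial p q al n s)
  <= Rabs_tail (binom_half al) n * beta_kernel p q s.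
Proof.
  intros Hs; rewrite euler_partial_eq, <- Rmult_minus_distr_l, Rabs_mult by auto.
  rewrite Rmult_comm, (Rabs_right (beta_kernel p q s)) by (left; apply beta_kernel_gt0).
  apply Rmult_le_compat_r; [left; apply beta_kernel_gt0|].
  apply is_series_sub_sum_le; [now apply is_series_binom_half|apply ex_series_Rabs_binom_half|].
  intros k; cbv beta; rewrite Rabs_mult, <- RPow_abs.
  assert (Hpow : 0 <= Rabs (1 - s) ^ k <= 1)
    by (split; [apply pow_le, Rabs_pos|]; rewrite <- (pow1 k) at 2; apply pow_incr;
        split; [apply Rabs_pos|apply Rabs_le; lra]).
  pose proof (Rabs_pos (binom_half al k)); nra.
Qed.

(* Euler's integral for 2F1, with the binomial expansion of
   ((1+s)/2)^al = (1 - (1-s)/2)^al integrated term by term. *)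
Lemma is_RInt01_Euler_hyp2F1 p q al B : 0 < p -> 0 < q ->
  is_RInt01 (beta_kernel p q) B ->
  exists H, is_hyp2F1 (- al) q (p + q) (1/2) H /\
    is_RInt01 (fun s => beta_kernel p q s * Rpower ((1 + s) / 2) al) (B * H).
Proof.
  intros Hp Hq HB.
  set (t := fun k => binom_half al k * (poch q k / poch (p + q) k)).
  assert (Et : ex_series t) by (apply ex_series_binom_half_poch_ratio; lra).
  exists (Series t); split.
  { apply is_series_Reals; eapply is_series_ext; [|apply Series_correct, Et].
    intros k; change (t k = poch (- al) k * poch q k / poch (p + q) k * (1/2) ^ k
                            / INR (fact k)).
    unfold t, binom_half, binom_coef.
    pose proof (poch_gt0 (p + q) k ltac:(lra)); pose proof (INR_fact_gt0 k); field; lra. }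
  apply (is_RInt01_approx _ (beta_kernel p q) B (euler_partial p q al)
           (sum_f_R0 (fun k => binom_half al k * (B * poch q k / poch (p + q) k)))
           (Rabs_tail (binom_half al))).
  - apply continuous01_euler_integrand.
  - apply continuous01_beta_kernel.
  - apply continuous01_euler_partial.
  - intros; left; apply beta_kernel_gt0.
  - exact HB.
  - intros n; now apply is_RInt01_euler_partial.
  - apply is_series_Reals, (is_series_ext (fun k => B * t k)).
    + intros k; change (B * t k = binom_half al k * (B * poch q k / poch (p + q) k)).
      unfold t; field; pose proof (poch_gt0 (p + q) k ltac:(lra)); lra.
    + apply (is_series_scal_l (V := R_NormedModule)), Series_correct, Et.
  - apply Un_cv_Rabs_tail, ex_series_Rabs_binom_half.
  - intros n s Hs; now apply Rabs_sub_euler_partial_le.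
Qed.

(** * The substitution *)

Lemma improper_int_0_inf_of_is_RInt01_comp (S dS h g : R -> R) l :
  (forall x, 0 < x -> is_derive S x (dS x) /\ continuous dS x) ->
  (forall x, 0 < x -> 0 < S x < 1) ->
  (forall e, 0 < e -> exists d, 0 < d /\ forall u, 0 < u < d -> 1 - e < S u) ->
  (forall e, 0 < e -> exists M, forall v, M < v -> S v < e) ->
  continuous01 h -> is_RInt01 h l ->
  (forall x, 0 < x -> g x = dS x * - h (S x)) ->
  improper_int_0_inf g l.
Proof.
  intros DS HS S0 Sinf Ch Hl Hg.
  assert (Hpos : forall u v x, 0 < u -> 0 < v -> Rmin u v <= x -> 0 < x)
    by (intros u v x Hu Hv Hx; pose proof (Rmin_glb_lt u v 0 Hu Hv); lra).
  assert (Hcomp : forall u v, 0 < u -> 0 < v -> is_RInt g u v (RInt h (S v) (S u))).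
  { intros u v Hu Hv; pose proof (HS u Hu); pose proof (HS v Hv).
    apply (is_RInt_ext (fun x => scal (dS x) (- h (S x)))).
    - intros x Hx; symmetry; apply Hg, (Hpos u v); lra.
    - rewrite <- (opp_RInt_swap h), <- (RInt_opp (V := R_CompleteNormedModule))
        by (apply ex_RInt01; auto).
      apply (is_RInt_comp (fun y => - h y) S dS); intros x Hx;
        pose proof (Hpos u v x Hu Hv (proj1 Hx)).
      + apply (continuous_opp h), Ch, HS; auto.
      + now apply DS. }
  split.
  - intros u v Hu Huv; constructor; apply ex_RInt_Reals_0; eexists; apply Hcomp; lra.
  - intros eps He; destruct (Hl eps He) as [del [Hdel K]].
    destruct (S0 del Hdel) as [d [Hd Hd']]; destruct (Sinf del Hdel) as [M HM].
    exists d; split; auto; exists (Rmax M 0); intros u v pr Hu Hv.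
    pose proof (Rmax_l M 0); pose proof (Rmax_r M 0).
    rewrite <- RInt_Reals, (is_RInt_unique _ _ _ _ (Hcomp u v ltac:(lra) ltac:(lra))).
    apply K; split; try apply HS; try apply HM; try apply Hd'; lra.
Qed.

Definition ecr_sub (lam x : R) := lam / sqrt (lam ^ 2 + x ^ 2).
Definition ecr_sub_deriv (lam x : R) :=
  - (lam * x) / ((lam ^ 2 + x ^ 2) * sqrt (lam ^ 2 + x ^ 2)).

Lemma sqrt_sum_sq_facts lam x : 0 < lam -> 0 < x ->
  sqrt (lam ^ 2 + x ^ 2) * sqrt (lam ^ 2 + x ^ 2) = lam ^ 2 + x ^ 2 /\
  lam < sqrt (lam ^ 2 + x ^ 2) /\ x < sqrt (lam ^ 2 + x ^ 2).
Proof.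
  intros Hl Hx; split; [apply sqrt_sqrt; nra|].
  split; [rewrite <- (sqrt_pow2 lam) at 1 by lra|rewrite <- (sqrt_pow2 x) at 1 by lra];
    apply sqrt_lt_1_alt; nra.
Qed.

Lemma is_derive_ecr_sub lam x : 0 < lam -> is_derive (ecr_sub lam) x (ecr_sub_deriv lam x).
Proof.
  intros Hl; assert (Hpos : 0 < lam ^ 2 + x ^ 2) by nra.
  pose proof (sqrt_lt_R0 _ Hpos) as Hsqrt.
  pose proof (sqrt_sqrt _ (Rlt_le _ _ Hpos)) as Hsq.
  unfold ecr_sub, ecr_sub_deriv; auto_derive;
    replace (lam * (lam * 1) + x * (x * 1)) with (lam ^ 2 + x ^ 2) by ring.
  - repeat split; lra.
  - rewrite Hsq; field; lra.
Qed.

Lemma continuous_ecr_sub_deriv lam x : 0 < lam -> continuous (ecr_sub_deriv lam) x.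
Proof.
  intros Hl; assert (Hpos : 0 < lam ^ 2 + x ^ 2) by nra; pose proof (sqrt_lt_R0 _ Hpos).
  apply (@ex_derive_continuous R_AbsRing R_NormedModule).
  unfold ecr_sub_deriv; eexists; auto_derive; [|reflexivity].
  replace (lam * (lam * 1) + x * (x * 1)) with (lam ^ 2 + x ^ 2) by ring.
  repeat split; try lra; apply Rmult_integral_contrapositive_currified; lra.
Qed.

Lemma ecr_sub_range lam x : 0 < lam -> 0 < x -> 0 < ecr_sub lam x < 1.
Proof.
  intros Hl Hx; destruct (sqrt_sum_sq_facts lam x Hl Hx) as [_ [Hlt _]].
  unfold ecr_sub; split; [apply Rdiv_lt_0_compat; lra|].
  apply (Rmult_lt_reg_r (sqrt (lam ^ 2 + x ^ 2))); [lra|].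
  unfold Rdiv; rewrite Rmult_assoc, Rinv_l; lra.
Qed.

Lemma ecr_sub_near_0 lam e : 0 < lam -> 0 < e ->
  exists d, 0 < d /\ forall u, 0 < u < d -> 1 - e < ecr_sub lam u.
Proof.
  intros Hl He; set (m := Rmin e 1).
  assert (Hm : 0 < m <= 1 /\ m <= e) by (unfold m; repeat split;
    [apply Rmin_glb_lt; lra|apply Rmin_r|apply Rmin_l]).
  exists (lam * m); split; [nra|]; intros u Hu.
  destruct (sqrt_sum_sq_facts lam u Hl (proj1 Hu)) as [Hsq [Hlt _]].
  set (sg := sqrt (lam ^ 2 + u ^ 2)) in *.
  assert (Hu2 : u * u < lam * lam * e).
  { apply Rlt_le_trans with ((lam * m) * (lam * m)); [nra|].
    assert (m * m <= e) by nra; nra. }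
  (* (sg - lam) (sg + lam) = u^2 and sg + lam >= 2 lam *)
  assert (Hk : (sg - lam) * (2 * lam) <= u * u) by nra.
  assert (Hk' : sg - lam < sg * e) by nra.
  unfold ecr_sub; fold sg; apply (Rmult_lt_reg_r sg); [lra|].
  unfold Rdiv; rewrite Rmult_assoc, Rinv_l; lra.
Qed.

Lemma ecr_sub_at_infty lam e : 0 < lam -> 0 < e ->
  exists M, forall v, M < v -> ecr_sub lam v < e.
Proof.
  intros Hl He; exists (lam / e); intros v Hv.
  assert (0 < lam / e) by (apply Rdiv_lt_0_compat; auto).
  assert (Hve : lam < e * v)
    by (apply (Rmult_lt_compat_l e) in Hv; [|lra]; field_simplify in Hv; lra).
  destruct (sqrt_sum_sq_facts lam v Hl ltac:(lra)) as [_ [_ Hv']].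
  unfold ecr_sub; apply (Rmult_lt_reg_r (sqrt (lam ^ 2 + v ^ 2))); [lra|].
  unfold Rdiv; rewrite Rmult_assoc, Rinv_l; nra.
Qed.

Lemma is_derive_ECR_cdf beta lam x : 0 < lam -> 0 < x ->
  is_derive (ECR_cdf beta lam) x
    (beta * Rpower (1 - ecr_sub lam x) (beta - 1) * - ecr_sub_deriv lam x).
Proof.
  intros Hl Hx; pose proof (ecr_sub_range lam x Hl Hx).
  apply (is_derive_ext_loc (fun t => Rpower (1 - ecr_sub lam t) beta)).
  - apply (locally_interval _ x 0 p_infty); simpl; auto.
    intros y Hy _; unfold ECR_cdf; destruct (Rle_dec y 0); [lra|reflexivity].
  - replace (beta * Rpower (1 - ecr_sub lam x) (beta - 1) * - ecr_sub_deriv lam x)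
      with (scal (- ecr_sub_deriv lam x) (beta * Rpower (1 - ecr_sub lam x) (beta - 1)))
      by (cbn; unfold mult; cbn; ring).
    apply (is_derive_comp (fun y => Rpower y beta) (fun t => 1 - ecr_sub lam t)).
    + apply is_derive_Rpower; lra.
    + replace (- ecr_sub_deriv lam x) with (minus 0 (ecr_sub_deriv lam x))
        by (unfold minus, plus, opp; cbn; ring).
      apply (is_derive_minus (fun _ => 1) (ecr_sub lam));
        [auto_derive; auto|now apply is_derive_ecr_sub].
Qed.

Lemma ln_ecr_sub lam x : 0 < lam -> 0 < x ->
  2 * ln x = 2 * ln lam - 2 * ln (ecr_sub lam x)
             + ln (1 - ecr_sub lam x) + ln (1 + ecr_sub lam x).
Proof.
  intros Hl Hx; pose proof (ecr_sub_range lam x Hl Hx) as Hs.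
  destruct (sqrt_sum_sq_facts lam x Hl Hx) as [_ [Hlt _]].
  set (s := ecr_sub lam x) in *.
  assert (Hid : (1 - s) * (1 + s) * (lam * lam) = (x * s) * (x * s)).
  { unfold s, ecr_sub; field_simplify_eq; [|lra].
    rewrite pow2_sqrt by nra; ring. }
  apply (f_equal ln) in Hid; rewrite !ln_mult in Hid; try nra; lra.
Qed.

Definition ecr_moment_integrand (beta lam r s : R) :=
  beta * Rpower lam r * Rpower 2 (r / 2) *
  (beta_kernel (1 - r) (r / 2 + beta) s * Rpower ((1 + s) / 2) (r / 2)).

Lemma Rpower_mult_ecr_density beta lam r x : 0 < lam -> 0 < x ->
  Rpower x r * (beta * Rpower (1 - ecr_sub lam x) (beta - 1))
  = ecr_moment_integrand beta lam r (ecr_sub lam x).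
Proof.
  intros Hl Hx; pose proof (ecr_sub_range lam x Hl Hx) as Hs.
  pose proof (ln_ecr_sub lam x Hl Hx) as Hln.
  set (s := ecr_sub lam x) in *.
  unfold ecr_moment_integrand, beta_kernel, Rpower; rewrite ln_div by lra.
  transitivity (beta * exp (r * ln x + (beta - 1) * ln (1 - s)));
    [rewrite exp_plus; ring|].
  transitivity (beta * exp (r * ln lam + r / 2 * ln 2 + ((1 - r - 1) * ln s
    + (r / 2 + beta - 1) * ln (1 - s) + r / 2 * (ln (1 + s) - ln 2))));
    [|rewrite !exp_plus; ring].
  apply Rmult_eq_compat_l, f_equal; replace (r * ln x) with (r / 2 * (2 * ln x)) by field.
  rewrite Hln; field.
Qed.

Theorem corollary3 (beta lambda r : R) (f : R -> R)
  (hbeta : 0 < beta) (hlambda : 0 < lambda)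
  (hr1 : - (2 * beta) < r) (hr2 : r < 1)
  (hf : forall x, 0 < x -> derivable_pt_lim (ECR_cdf beta lambda) x (f x)) :
  exists EXr B H,
    improper_int_0_inf (fun x => Rpower x r * f x) EXr /\
    is_Beta (1 - r) (r / 2 + beta) B /\
    is_hyp2F1 (- (r / 2)) (r / 2 + beta) (1 - r / 2 + beta) (1 / 2) H /\
    EXr = beta * Rpower (lambda * sqrt 2) r * B * H.
Proof.
  assert (hp : 0 < 1 - r) by lra; assert (hq : 0 < r / 2 + beta) by lra.
  destruct (ex_is_RInt01_beta_kernel _ _ hp hq) as [B HB].
  destruct (is_RInt01_Euler_hyp2F1 _ _ (r / 2) B hp hq HB) as [H [HH HE]].
  replace (1 - r + (r / 2 + beta)) with (1 - r / 2 + beta) in HH by field.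
  exists (beta * Rpower lambda r * Rpower 2 (r / 2) * (B * H)), B, H.
  split; [|split; [|split]].
  - apply (improper_int_0_inf_of_is_RInt01_comp (ecr_sub lambda) (ecr_sub_deriv lambda)
             (ecr_moment_integrand beta lambda r)).
    + intros x Hx; split; [now apply is_derive_ecr_sub|now apply continuous_ecr_sub_deriv].
    + intros; now apply ecr_sub_range.
    + intros; now apply ecr_sub_near_0.
    + intros; now apply ecr_sub_at_infty.
    + apply continuous01_scal, continuous01_euler_integrand.
    + now apply is_RInt01_scal; [apply continuous01_euler_integrand|].
    + intros x Hx.
      rewrite <- (is_derive_unique _ _ _ (proj2 (is_derive_Reals _ _ _) (hf x Hx))),
              (is_derive_unique _ _ _ (is_derive_ECR_cdf beta lambda x hlambda Hx)).
      rewrite <- Rpower_mult_ecr_density by auto; ring.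
  - apply improper_int_0_1_of_is_RInt01; [apply continuous01_beta_kernel|exact HB].
  - exact HH.
  - rewrite <- Rpower_mult_distr, <- (Rpower_sqrt 2), Rpower_mult by (try apply sqrt_lt_R0; lra).
    replace (/ 2 * r) with (r / 2) by field; ring.
Qed.
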